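(* Let $T$ be a triangle with diameter $h_T$, maximum angle $\theta_M\in(0,\pi)$, edges $e_1,e_2,e_3$ and corresponding unit tangent vectors $\mathbf t_1,\mathbf t_2,\mathbf t_3$. Then $$\|\nabla v_h\|_{0,T}\le\frac{h_T^{1/2}}{\sqrt{2\sin(\theta_M)}}\sum_{i=1}^3\|\nabla v_h\cdot\mathbf t_i\|_{L^2(e_i)}\qquad\forall v_h\in\mathcal P_1(T).$$
   Context: $\mathcal P_1(T)$ is the space of affine functions on $T$. *)

From HB Require Import structures.
From mathcomp Require Import all_boot all_order all_algebra.
From mathcomp Require Import all_classical all_reals all_analysis.
Set Implicit Arguments. Unset Strict Implicit. Unset Printing Implicit Defensive.
Import Order.TTheory GRing.Theory Num.Theory.
Import numFieldNormedType.Exports.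
Local Open Scope classical_set_scope.
Local Open Scope ring_scope.

Section Defs.
Variable R : realType.
Implicit Types (p q a b c : R * R).

Definition dot2 p q : R := p.1 * q.1 + p.2 * q.2.
Definition enorm2 p : R := Num.sqrt (dot2 p p).
Definition edist2 p q : R := enorm2 (q - p).

Definition nondegenerate_tri a b c : Prop :=
  (b.1 - a.1) * (c.2 - a.2) - (b.2 - a.2) * (c.1 - a.1) != 0.

Definition triangle a b c : set (R * R) :=
  [set x | exists l1 l2 l3 : R, [/\ 0 <= l1, 0 <= l2, 0 <= l3,
     l1 + l2 + l3 = 1 & x = l1 *: a + l2 *: b + l3 *: c]].

Definition set_diameter (S : set (R * R)) : R :=
  sup [set edist2 x y | x in S & y in S].

Definition angle_at a b c : R :=
  acos (dot2 (b - a) (c - a) / (enorm2 (b - a) * enorm2 (c - a))).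

Definition max_angle a b c : R :=
  Num.max (angle_at a b c) (Num.max (angle_at b c a) (angle_at c a b)).

Definition unit_tangent a b : R * R := (enorm2 (b - a))^-1 *: (b - a).

Definition P1 (v : R * R -> R) : Prop :=
  exists (g1 g2 k : R), forall x, v x = g1 * x.1 + g2 * x.2 + k.

Definition grad2 (v : R * R -> R) (x : R * R) : R * R :=
  ('D_((1, 0) : R * R) v x, 'D_((0, 1) : R * R) v x).

Definition leb2 := ((@lebesgue_measure R) \x (@lebesgue_measure R))%E.

Definition L2norm_vec (S : set (R * R)) (F : R * R -> R * R) : R :=
  Num.sqrt (fine (\int[leb2]_(x in S) ((dot2 (F x) (F x))%R%:E))%E).

(** L^2 norm of a scalar function on the segment [a,b], w.r.t. arc length. *)
Definition L2norm_edge a b (f : R * R -> R) : R :=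
  Num.sqrt (fine (\int[@lebesgue_measure R]_(s in `[0%R, 1%R]%classic)
                    ((f (a + s *: (b - a)) ^+ 2 * edist2 a b)%R%:E))%E).
End Defs.

From HB Require Import structures.
From mathcomp Require Import all_boot all_order all_algebra.
From mathcomp Require Import all_classical all_reals all_analysis.
From mathcomp Require Import ring lra measurable_realfun.
Import Order.TTheory GRing.Theory Num.Theory.
Import numFieldNormedType.Exports.
Set Implicit Arguments. Unset Strict Implicit. Unset Printing Implicit Defensive.
Local Open Scope ring_scope.

(* For affine v the gradient is a constant vector g, so the left-hand side is
   |g| |T|^(1/2) with |T| = |D|/2, D the cross product of two edge vectors, and
   the edge term of an edge e is |g.e| / |e|^(1/2).  At a vertex with edge
   vectors u, w the identity
     |g|^2 D^2 = (g.u)^2 |w|^2 + (g.w)^2 |u|^2 - 2 (g.u) (g.w) (u.w)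
   and Cauchy-Schwarz give |g|^2 D^2 <= (|g.u| |w| + |g.w| |u|)^2, while the
   sine of the angle there is |D| / (|u| |w|); as |u|, |w| <= h_T this yields
   the estimate at every vertex, in particular at the one carrying theta_M.
   The area bound comes from Fubini: the vertical sections of T are segments
   whose length is a tent function of the abscissa. *)

Section PlaneGeometry.
Variable R : realType.
Local Notation sqrt := Num.sqrt.
Implicit Types (g u w : R * R) (a b c p q x y : R * R).

Definition cross u w : R := u.1 * w.2 - u.2 * w.1.

Lemma crossC u w : cross w u = - cross u w.
Proof. by rewrite /cross; ring. Qed.

Lemma cross0l w : cross 0 w = 0.
Proof. by rewrite /cross /= !mul0r subrr. Qed.

Lemma dot2_ge0 u : 0 <= dot2 u u.
Proof. by rewrite /dot2 addr_ge0 // -expr2 sqr_ge0. Qed.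

Lemma enorm2_ge0 u : 0 <= enorm2 u.
Proof. exact: sqrtr_ge0. Qed.

Lemma enorm2_sqr u : enorm2 u ^+ 2 = dot2 u u.
Proof. by rewrite sqr_sqrtr // dot2_ge0. Qed.

Lemma enorm2_gt0 u : u != 0 -> 0 < enorm2 u.
Proof.
move=> u0; rewrite sqrtr_gt0 lt_def dot2_ge0 andbT.
apply: contraNneq u0; rewrite /dot2 => u00.
by apply/eqP; apply: injective_projections => /=; nra.
Qed.

Lemma cross_neq0_enorm2_gt0 u w : cross u w != 0 -> 0 < enorm2 u /\ 0 < enorm2 w.
Proof.
move=> uw0; split; apply: enorm2_gt0; apply: contraNneq uw0 => ->.
  by rewrite cross0l.
by rewrite crossC cross0l oppr0.
Qed.

Lemma enorm2N u : enorm2 (- u) = enorm2 u.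
Proof. by rewrite /enorm2 /dot2 /= !mulrNN. Qed.

Lemma enorm2Z (l : R) u : enorm2 (l *: u) = `|l| * enorm2 u.
Proof.
rewrite /enorm2 -sqrtr_sqr -sqrtrM ?sqr_ge0 //; congr sqrt.
by rewrite /dot2 /= /GRing.scale /=; ring.
Qed.

Lemma edist2C p q : edist2 p q = edist2 q p.
Proof. by rewrite /edist2 -opprB enorm2N. Qed.

Lemma lagrange_identity2 u w : dot2 u w ^+ 2 + cross u w ^+ 2 = dot2 u u * dot2 w w.
Proof. by rewrite /dot2 /cross; ring. Qed.

Lemma normr_dot2_le u w : `|dot2 u w| <= enorm2 u * enorm2 w.
Proof.
rewrite -(ler_pXn2r (n := 2)) ?nnegrE ?mulr_ge0 ?enorm2_ge0 //.
rewrite exprMn !enorm2_sqr real_normK ?num_real // -lagrange_identity2.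
by rewrite lerDl sqr_ge0.
Qed.

Lemma enorm2D_le u w : enorm2 (u + w) <= enorm2 u + enorm2 w.
Proof.
rewrite -(ler_pXn2r (n := 2)) ?nnegrE ?addr_ge0 ?enorm2_ge0 //.
rewrite sqrrD !enorm2_sqr.
have := ler_norm (dot2 u w); have := normr_dot2_le u w.
by rewrite /dot2 /=; nra.
Qed.

Lemma sin_acos_dot2 u w : cross u w != 0 ->
  sin (acos (dot2 u w / (enorm2 u * enorm2 w))) = `|cross u w| / (enorm2 u * enorm2 w).
Proof.
move=> uw0; have [U0 W0] := cross_neq0_enorm2_gt0 uw0.
have uwp : 0 < enorm2 u * enorm2 w := mulr_gt0 U0 W0.
rewrite sin_acos; last first.
  by rewrite -ler_norml normrM normfV (gtr0_norm uwp) ler_pdivrMr // mul1r normr_dot2_le.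
have -> : 1 - (dot2 u w / (enorm2 u * enorm2 w)) ^+ 2 = (cross u w / (enorm2 u * enorm2 w)) ^+ 2.
  have d0 : dot2 u u * dot2 w w != 0 by rewrite -!enorm2_sqr -exprMn expf_neq0 // gt_eqF.
  rewrite !expr_div_n exprMn !enorm2_sqr -lagrange_identity2.
  by field; rewrite lagrange_identity2.
by rewrite sqrtr_sqr normrM normfV (gtr0_norm uwp).
Qed.

Lemma dot2_cross_le g u w : dot2 g g * cross u w ^+ 2 <=
  (`|dot2 g u| * enorm2 w + `|dot2 g w| * enorm2 u) ^+ 2.
Proof.
have e : dot2 g g * cross u w ^+ 2 = (dot2 g u * enorm2 w) ^+ 2 + (dot2 g w * enorm2 u) ^+ 2
    - 2 * (dot2 g u * dot2 g w * dot2 u w).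
  by rewrite !exprMn !enorm2_sqr /dot2 /cross; ring.
have cs : - (`|dot2 g u| * `|dot2 g w| * (enorm2 u * enorm2 w)) <= dot2 g u * dot2 g w * dot2 u w.
  have : `|dot2 g u * dot2 g w * dot2 u w|
      <= `|dot2 g u| * `|dot2 g w| * (enorm2 u * enorm2 w).
    by rewrite !normrM ler_wpM2l ?mulr_ge0 // normr_dot2_le.
  by case/ler_normlP; rewrite lerNl.
rewrite e sqrrD !exprMn !real_normK ?num_real //; nra.
Qed.

Lemma sqrt_le_sqrt_div_mul (A B C S : R) : 0 <= A -> 0 <= B -> 0 < C -> 0 <= S ->
  A * C <= B * S ^+ 2 -> sqrt A <= sqrt B / sqrt C * S.
Proof.
move=> A0 B0 C0 S0 ACBS.
have -> : sqrt B / sqrt C * S = sqrt (B * S ^+ 2 / C).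
  rewrite sqrtrM ?mulr_ge0 ?sqr_ge0 // sqrtrM ?sqr_ge0 // sqrtrV ?ltW //.
  by rewrite sqrtr_sqr ger0_norm // mulrAC.
by rewrite ler_sqrt ?divr_ge0 ?mulr_ge0 ?sqr_ge0 ?(ltW C0) // ler_pdivlMr.
Qed.

Lemma weighted_sum_le (x y z A B S : R) : 0 < x <= z -> 0 < y <= z ->
  0 <= A -> 0 <= B -> A / x + B / y <= S -> A * y ^+ 2 + B * x ^+ 2 <= z * x * y * S.
Proof.
move=> /andP[x0 xz] /andP[y0 yz] A0 B0 HS.
have z0 : 0 <= z := le_trans (ltW x0) xz.
have -> : z * x * y * S = z * (A * y + B * x) + z * x * y * (S - (A / x + B / y)).
  by field; rewrite !gt_eqF.
have Ay : 0 <= A * y * (z - y) by rewrite !mulr_ge0 ?subr_ge0 ?(ltW y0).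
have Bx : 0 <= B * x * (z - x) by rewrite !mulr_ge0 ?subr_ge0 ?(ltW x0).
have xyS : 0 <= z * x * y * (S - (A / x + B / y)) by rewrite !mulr_ge0 ?subr_ge0 ?(ltW x0) ?(ltW y0).
nra.
Qed.

Lemma vertex_bound g u w (h S : R) : cross u w != 0 -> enorm2 u <= h -> enorm2 w <= h ->
  `|dot2 g u| / sqrt (enorm2 u) + `|dot2 g w| / sqrt (enorm2 w) <= S ->
  sqrt (dot2 g g * (`|cross u w| / 2)) <=
  sqrt h / sqrt (2 * sin (acos (dot2 u w / (enorm2 u * enorm2 w)))) * S.
Proof.
move=> uw0 uh wh HS; have [U0 W0] := cross_neq0_enorm2_gt0 uw0.
have h0 : 0 <= h := le_trans (ltW U0) uh.
have S0 : 0 <= S by apply: le_trans HS; rewrite addr_ge0 ?divr_ge0 ?sqrtr_ge0.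
have key : dot2 g g * cross u w ^+ 2 <= h * (enorm2 u * enorm2 w) * S ^+ 2.
  apply: (le_trans (dot2_cross_le g u w)).
  have sq_le X : 0 < X <= h -> 0 < sqrt X <= sqrt h.
    by case/andP=> X0 Xh; rewrite sqrtr_gt0 X0 ler_sqrt.
  have uh' : 0 < enorm2 u <= h by rewrite U0 uh.
  have wh' : 0 < enorm2 w <= h by rewrite W0 wh.
  have HS2 := weighted_sum_le (sq_le _ uh') (sq_le _ wh') (normr_ge0 _) (normr_ge0 _) HS.
  rewrite !sqr_sqrtr ?enorm2_ge0 // in HS2.
  have X0 : 0 <= `|dot2 g u| * enorm2 w + `|dot2 g w| * enorm2 u.
    by rewrite addr_ge0 ?mulr_ge0 ?enorm2_ge0.
  apply: (le_trans (y := (sqrt h * sqrt (enorm2 u) * sqrt (enorm2 w) * S) ^+ 2)).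
    by rewrite !expr2 ler_pM.
  by rewrite !exprMn !sqr_sqrtr ?enorm2_ge0 // mulrA.
rewrite (sin_acos_dot2 uw0); apply: sqrt_le_sqrt_div_mul => //.
- by rewrite !mulr_ge0 ?dot2_ge0 ?invr_ge0.
- by rewrite mulr_gt0 ?ltr0n ?divr_gt0 ?mulr_gt0 ?normr_gt0.
have -> : dot2 g g * (`|cross u w| / 2) * (2 * (`|cross u w| / (enorm2 u * enorm2 w)))
    = dot2 g g * `|cross u w| ^+ 2 / (enorm2 u * enorm2 w).
  by field; rewrite !gt_eqF.
by rewrite real_normK ?num_real // ler_pdivrMr ?mulr_gt0 // mulrAC.
Qed.

End PlaneGeometry.

Section Triangle.
Local Open Scope classical_set_scope.
Variable R : realType.
Implicit Types (a b c x y : R * R).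

Lemma triangle_perm12 a b c : triangle a b c = triangle b a c.
Proof.
apply/seteqP; split=> x [l1 [l2 [l3 [? ? ? hs ->]]]]; exists l2, l1, l3;
  (split=> //; first lra); by congr (_ + _); exact: addrC.
Qed.

Lemma triangle_perm23 a b c : triangle a b c = triangle a c b.
Proof.
apply/seteqP; split=> x [l1 [l2 [l3 [? ? ? hs ->]]]]; exists l1, l3, l2;
  (split=> //; first lra); by rewrite -!addrA; congr (_ + _); exact: addrC.
Qed.

Lemma triangle_rotate a b c : triangle b c a = triangle a b c.
Proof. by rewrite [RHS]triangle_perm12 triangle_perm23. Qed.

Lemma cross_rotate a b c : cross (c - b) (a - b) = cross (b - a) (c - a).
Proof. by rewrite /cross /=; ring. Qed.

Lemma triangle_vertices a b c : [/\ triangle a b c a, triangle a b c b & triangle a b c c].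
Proof.
split; [exists 1, 0, 0 | exists 0, 1, 0 | exists 0, 0, 1];
  by split; rewrite ?ler01 ?lexx ?scale0r ?scale1r ?addr0 ?add0r.
Qed.

(* Cramer's rule for x - a = l2 (b - a) + l3 (c - a). *)
Definition bary2 a b c x : R := cross (x - a) (c - a) / cross (b - a) (c - a).
Definition bary3 a b c x : R := cross (b - a) (x - a) / cross (b - a) (c - a).

Lemma triangle_bary a b c : cross (b - a) (c - a) != 0 ->
  triangle a b c = [set x | 0 <= bary2 a b c x] `&` [set x | 0 <= bary3 a b c x]
                   `&` [set x | 0 <= 1 - bary2 a b c x - bary3 a b c x].
Proof.
move=> D0; apply/seteqP; split=> x /=.
  move=> [l1 [l2 [l3 [l10 l20 l30 hs ->]]]].
  have -> : l1 = 1 - l2 - l3 by lra.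
  have -> : bary2 a b c ((1 - l2 - l3) *: a + l2 *: b + l3 *: c) = l2.
    by rewrite /bary2 /cross /= /GRing.scale /=; field.
  have -> : bary3 a b c ((1 - l2 - l3) *: a + l2 *: b + l3 *: c) = l3.
    by rewrite /bary3 /cross /= /GRing.scale /=; field.
  by split; first split; lra.
move=> [[b20 b30] b10].
exists (1 - bary2 a b c x - bary3 a b c x), (bary2 a b c x), (bary3 a b c x).
split=> //; first lra.
apply: injective_projections; rewrite /= /GRing.scale /= /bary2 /bary3;
  move: D0; rewrite /cross /= => D0; by field.
Qed.

Lemma measurable_nonneg (f : R * R -> R) : measurable_fun setT f ->
  measurable [set x | 0 <= f x].
Proof.
move=> mf; have := mf measurableT `[0, +oo[ (measurable_itv _).
by rewrite setTI preimage_itvcy.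
Qed.

Lemma measurable_cross_subl a (u : R * R) : measurable_fun setT (fun x => cross (x - a) u).
Proof.
have m1 : measurable_fun setT (fun x : R * R => x.1 - a.1).
  exact: measurable_funB measurable_fst (measurable_cst _).
have m2 : measurable_fun setT (fun x : R * R => x.2 - a.2).
  exact: measurable_funB measurable_snd (measurable_cst _).
exact: measurable_funB (measurable_funM m1 (measurable_cst _)) (measurable_funM m2 (measurable_cst _)).
Qed.

Lemma measurable_triangle a b c : cross (b - a) (c - a) != 0 -> measurable (triangle a b c).
Proof.
move=> D0; have mb2 : measurable_fun setT (bary2 a b c).
  exact: measurable_funM (measurable_cross_subl _ _) (measurable_cst _).
have mb3 : measurable_fun setT (bary3 a b c).
  rewrite /bary3; under eq_fun do rewrite crossC.
  exact: measurable_funM (measurable_funN (measurable_cross_subl _ _)) (measurable_cst _).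
rewrite triangle_bary //; apply: measurableI; first apply: measurableI;
  apply: measurable_nonneg => //.
exact: measurable_funB (measurable_funB (measurable_cst _) mb2) mb3.
Qed.

Lemma enorm2_triangle_le a b c x : triangle a b c x ->
  enorm2 x <= enorm2 a + enorm2 b + enorm2 c.
Proof.
move=> [l1 [l2 [l3 [l10 l20 l30 hs ->]]]].
rewrite (le_trans (enorm2D_le _ _)) // (le_trans (lerD (enorm2D_le _ _) (lexx _))) //.
rewrite !enorm2Z !ger0_norm //.
have := enorm2_ge0 a; have := enorm2_ge0 b; have := enorm2_ge0 c; nra.
Qed.

Lemma edist2_le_diameter a b c x y : triangle a b c x -> triangle a b c y ->
  edist2 x y <= set_diameter (triangle a b c).
Proof.
move=> Tx Ty; apply: ub_le_sup; last by exists x => //; exists y.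
exists (2 * (enorm2 a + enorm2 b + enorm2 c)) => _ [p Tp [q Tq <-]].
rewrite /edist2 (le_trans (enorm2D_le _ _)) // enorm2N.
by have := enorm2_triangle_le Tp; have := enorm2_triangle_le Tq; lra.
Qed.

End Triangle.

Section Area.
Local Open Scope classical_set_scope.
Variable R : realType.
Implicit Types (a b c : R * R).
Local Notation leb := (@lebesgue_measure R).

Lemma integral_itv_affine (p q al be : R) : p <= q ->
  (\int[leb]_(x in `[p, q]) (al * x + be)%:E =
   (((al * p + be) + (al * q + be)) / 2 * (q - p))%:E)%E.
Proof.
rewrite le_eqVlt => /predU1P[<- | pq].
  by rewrite set_itv1 integral_set1 subrr mulr0.
pose F (x : R) : R := al * (x ^+ 2 / 2) + be * x.
have dF (x : R) : is_derive x 1 F (al * x + be).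
  by apply: is_derive_eq; rewrite !scaler0 /GRing.scale /=; field.
transitivity ((F q)%:E - (F p)%:E)%E; last by rewrite -EFinB /F; congr EFin; field.
apply: continuous_FTC2 => //.
- apply: continuous_subspaceT => x.
  exact: continuousD (continuousM (cvg_cst _) cvg_id) (cvg_cst _).
- split.
  + by move=> z _; exact: ex_derive.
  + apply/cvg_at_right_filter.
    by apply/differentiable_continuous/derivable1_diffP; exact: ex_derive.
  + apply/cvg_at_left_filter.
    by apply/differentiable_continuous/derivable1_diffP; exact: ex_derive.
- by move=> z _; rewrite derive1E; apply: derive_val.
Qed.

(* The interval is open at p so that nothing is required of phi there. *)
Lemma integral_le_trapezoid (phi : R -> \bar R) (p q fp fq : R) : p <= q ->
  measurable_fun `]p, q] phi -> (forall x, (0 <= phi x)%E) ->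
  (forall x, p < x <= q -> (phi x <= (((q - x) * fp + (x - p) * fq) / (q - p))%:E)%E) ->
  (\int[leb]_(x in `]p, q]) phi x <= ((fp + fq) / 2 * (q - p))%:E)%E.
Proof.
rewrite le_eqVlt => /predU1P[<- | pq] mphi phi0 phi_le.
  by rewrite set_itv_ge ?bnd_simp ?ltxx // integral_set0 subrr mulr0.
pose al := (fq - fp) / (q - p); pose be := (q * fp - p * fq) / (q - p).
have qp0 : q - p != 0 by rewrite subr_eq0 gt_eqF.
have affine x : ((q - x) * fp + (x - p) * fq) / (q - p) = al * x + be.
  by rewrite /al /be; field.
have maff : measurable_fun setT (fun x : R => (al * x + be)%:E).
  by apply/measurable_EFinP; exact: measurable_funD.
apply: (@le_trans _ _ (\int[leb]_(x in `]p, q]) (al * x + be)%:E)%E).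
  apply: ge0_le_integral => //; first exact: measurable_funS maff.
  by move=> x; rewrite /= in_itv /= => /phi_le; rewrite affine.
rewrite integral_itv_obnd_cbnd; last exact: measurable_funS maff.
rewrite integral_itv_affine ?(ltW pq) // lee_fin -!affine.
by rewrite (_ : _ / 2 * _ = (fp + fq) / 2 * (q - p)) //; field.
Qed.

Lemma lebesgue_measure_segment_le (S : set R) (m K L : R) : 0 <= L ->
  S `<=` [set m + l * K | l in `[0, L]] -> (leb S <= (`|K| * L)%:E)%E.
Proof.
move=> L0 SK; pose lo := m + Num.min 0 (K * L).
apply: (@le_trans _ _ (leb `[lo, lo + `|K| * L])).
  apply: le_outer_measure => y /SK [l]; rewrite /= in_itv /= => /andP[l0 lL] <-.
  rewrite in_itv /= /lo; have [K0|K0] := leP 0 K.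
    rewrite ger0_norm // (_ : Num.min 0 (K * L) = 0); last by apply/min_idPl; rewrite mulr_ge0.
    by apply/andP; split; nra.
  rewrite ltr0_norm // (_ : Num.min 0 (K * L) = K * L); last first.
    by apply/min_idPr; rewrite nmulr_rle0 // ltW.
  by apply/andP; split; nra.
rewrite lebesgue_measure_itv /=; case: ifP => _; last by rewrite lee_fin mulr_ge0.
by rewrite -EFinB lee_fin; lra.
Qed.

Lemma triangle_section a b c (x y : R) : a.1 <= b.1 <= c.1 -> a.1 < c.1 ->
  triangle a b c (x, y) ->
  exists2 l, [/\ 0 <= l, a.1 <= x <= c.1, l * (b.1 - a.1) <= x - a.1 & l * (c.1 - b.1) <= c.1 - x] &
    y = a.2 + (x - a.1) * (c.2 - a.2) / (c.1 - a.1) + l * (- cross (b - a) (c - a) / (c.1 - a.1)).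
Proof.
move=> /andP[ab bc] ac [l1 [l2 [l3 [l10 l20 l30 hs xyE]]]].
have l1E : l1 = 1 - l2 - l3 by lra.
have xE : x = l1 * a.1 + l2 * b.1 + l3 * c.1 by rewrite -[x]/((x, y).1) xyE.
have yE : y = l1 * a.2 + l2 * b.2 + l3 * c.2 by rewrite -[y]/((x, y).2) xyE.
rewrite l1E in xE yE; exists l2; first by split=> //; [apply/andP; split | |]; nra.
by rewrite yE xE /cross /=; field; rewrite subr_eq0 gt_eqF.
Qed.

Lemma xsection_triangle_le a b c (x L : R) : a.1 <= b.1 <= c.1 -> a.1 < c.1 -> 0 <= L ->
  (forall l, 0 <= l -> l * (b.1 - a.1) <= x - a.1 -> l * (c.1 - b.1) <= c.1 - x -> l <= L) ->
  (leb (xsection (triangle a b c) x) <= (`|cross (b - a) (c - a)| / (c.1 - a.1) * L)%:E)%E.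
Proof.
move=> abc ac L0 lL.
have -> : `|cross (b - a) (c - a)| / (c.1 - a.1) = `|- cross (b - a) (c - a) / (c.1 - a.1)|.
  by rewrite normrM normrN normfV (@gtr0_norm _ (c.1 - a.1)) // subr_gt0.
apply: lebesgue_measure_segment_le L0 _ => y; rewrite /xsection /= inE.
move=> /(triangle_section abc ac)[l [l0 _ lab lbc] ->].
by exists l => //; rewrite /= in_itv /= l0 lL.
Qed.

Lemma leb2_triangle_sorted a b c : a.1 <= b.1 <= c.1 -> cross (b - a) (c - a) != 0 ->
  (leb2 (triangle a b c) <= (`|cross (b - a) (c - a)| / 2)%:E)%E.
Proof.
move=> abc D0; have /andP[ab bc] := abc.
have ac : a.1 < c.1.
  rewrite lt_neqAle (le_trans ab bc) andbT; apply: contraNneq D0 => ac.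
  have ba : b.1 = a.1 by apply/eqP; rewrite eq_le ab ac bc.
  by rewrite /cross /= ba -ac !subrr !mul0r mulr0 subrr.
(* The vertical sections of T are segments of length at most C times a tent
   function vanishing at a.1 and c.1 and equal to 1 at b.1. *)
set C := `|cross (b - a) (c - a)| / (c.1 - a.1).
have mT := measurable_triangle D0.
rewrite /leb2 /product_measure1 /=.
set phi := fun x => leb (xsection (triangle a b c) x).
have mphi := measurable_fun_xsection (T1 := g_sigma_algebraType R.-ocitv.-measurable) leb mT.
have phi0 x : (0 <= phi x)%E by exact: measure_ge0.
have -> : (\int[leb]_x phi x = \int[leb]_(x in `]a.1, c.1]) phi x)%E.
  rewrite integral_itv_obnd_cbnd; last exact: measurable_funS mphi.
  rewrite [RHS]integral_mkcond; apply: eq_integral => x _.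
  rewrite /patch; case: ifP => // /negbT xac.
  rewrite /phi (_ : xsection _ x = set0) ?measure0 //; apply/seteqP; split=> // y.
  rewrite /xsection /= inE => /(triangle_section abc ac)[l [_ axc _ _] _].
  by move: xac => /negP; apply; apply: mem_set; rewrite /= in_itv /= axc.
rewrite (@itv_bndbnd_setU _ _ _ (BRight b.1)) ?bnd_simp // ge0_integral_setU //; first last.
- by apply/disj_setPS => x []; rewrite /= !in_itv /= => /andP[_ xb] /andP[bx _]; lra.
- by rewrite -itv_bndbnd_setU ?bnd_simp //; exact: measurable_funS mphi.
have rise := @integral_le_trapezoid phi a.1 b.1 0 C ab (measurable_funS _ _ mphi) phi0.
have fall := @integral_le_trapezoid phi b.1 c.1 C 0 bc (measurable_funS _ _ mphi) phi0.
apply: le_trans (leeD (rise _ _ _) (fall _ _ _)) _ => //.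
- move=> x /andP[ax xb]; rewrite mulr0 add0r mulrAC mulrC.
  apply: xsection_triangle_le => //; first by rewrite divr_ge0 ?subr_ge0 ?(ltW ax).
  by move=> l _ lab _; rewrite ler_pdivlMr ?subr_gt0 // (lt_le_trans ax).
- move=> x /andP[bx xc]; rewrite mulr0 addr0 mulrAC mulrC.
  apply: xsection_triangle_le => //; first by rewrite divr_ge0 ?subr_ge0.
  by move=> l _ _ lcb; rewrite ler_pdivlMr ?subr_gt0 // (lt_le_trans bx).
rewrite /= lee_fin /C (_ : _ + _ = `|cross (b - a) (c - a)| / 2) //.
by field; rewrite subr_eq0 gt_eqF.
Qed.

Lemma leb2_triangle_le a b c : cross (b - a) (c - a) != 0 ->
  (leb2 (triangle a b c) <= (`|cross (b - a) (c - a)| / 2)%:E)%E.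
Proof.
pose P a b c := cross (b - a) (c - a) != 0 ->
  (leb2 (triangle a b c) <= (`|cross (b - a) (c - a)| / 2)%:E)%E.
have P12 a' b' c' : P a' b' c' -> P b' a' c'.
  have E : cross (a' - b') (c' - b') = - cross (b' - a') (c' - a') by rewrite /cross /=; ring.
  by rewrite /P triangle_perm12 E normrN oppr_eq0.
have P23 a' b' c' : P a' b' c' -> P a' c' b'.
  by rewrite /P triangle_perm23 crossC normrN oppr_eq0.
have Psorted a' b' c' : a'.1 <= b'.1 -> b'.1 <= c'.1 -> P a' b' c'.
  by move=> ab bc; apply: leb2_triangle_sorted; rewrite ab.
rewrite -/(P a b c).
have [ab|/ltW ba] := leP a.1 b.1; have [bc|/ltW cb] := leP b.1 c.1.
- exact: Psorted.
- have [ac|/ltW ca] := leP a.1 c.1; first exact/P23/Psorted.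
  exact/P23/P12/Psorted.
- have [ac|/ltW ca] := leP a.1 c.1; first exact/P12/Psorted.
  exact/P12/P23/Psorted.
- exact/P23/P12/P23/Psorted.
Qed.

End Area.

Section LinearElement.
Local Open Scope classical_set_scope.
Variable R : realType.
Local Notation sqrt := Num.sqrt.
Implicit Types (a b c p q : R * R).

Lemma L2norm_vec_cst_le (S : set (R * R)) (g : R * R) (m : R) : measurable S ->
  (leb2 S <= m%:E)%E -> L2norm_vec S (fun=> g) <= sqrt (dot2 g g * m).
Proof.
move=> mS Sm; rewrite /L2norm_vec integral_cst //.
set mu := (X in fine (_ * X)).
have mu0 : (0 <= mu)%E := measure_ge0 _ _.
have muS : (mu <= m%:E)%E := Sm.
clearbody mu; case: mu mu0 muS => [r| |] //= /fine_ge0 /= r0; rewrite lee_fin => rm.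
by rewrite ler_sqrt ?mulr_ge0 ?dot2_ge0 ?(le_trans r0 rm) // ler_wpM2l ?dot2_ge0.
Qed.

Lemma L2norm_edge_cst p q (s : R) : L2norm_edge p q (fun=> s) = `|s| * sqrt (edist2 p q).
Proof.
rewrite /L2norm_edge integral_cst //= lebesgue_measure_itv /= lte_fin ltr01 oppr0 adde0 mule1 /=.
by rewrite sqrtrM ?sqr_ge0 // sqrtr_sqr.
Qed.

Lemma normr_dot2_unit_tangent g p q :
  `|dot2 g (unit_tangent p q)| * sqrt (edist2 p q) = `|dot2 g (q - p)| / sqrt (edist2 p q).
Proof.
have -> : dot2 g (unit_tangent p q) = (edist2 p q)^-1 * dot2 g (q - p).
  by rewrite /dot2 /unit_tangent /= /GRing.scale /=; ring.
(* For p = q both sides vanish, since 0^-1 = 0. *)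
have [->|e0] := eqVneq (edist2 p q) 0; first by rewrite sqrtr0 invr0 !mulr0.
have e_ge0 : 0 <= edist2 p q := enorm2_ge0 _.
have e_gt0 : 0 < sqrt (edist2 p q) by rewrite sqrtr_gt0 lt_def e0 e_ge0.
rewrite -{1}(sqr_sqrtr e_ge0) normrM ger0_norm ?invr_ge0 ?sqr_ge0 //.
by field; rewrite gt_eqF.
Qed.

Lemma derive_affine (g1 g2 k : R) (x d : R * R) :
  'D_d (fun y : R * R => g1 * y.1 + g2 * y.2 + k) x = g1 * d.1 + g2 * d.2.
Proof.
rewrite /derive; apply: cvg_lim => //.
apply: cvg_near_cst; near=> h.
have h0 : h != 0 by near: h; exact: nbhs_dnbhs_neq.
by rewrite /GRing.scale /= /GRing.scale /=; field.
Unshelve. all: by end_near. Qed.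

Lemma grad2_affine (g1 g2 k : R) (x : R * R) :
  grad2 (fun y : R * R => g1 * y.1 + g2 * y.2 + k) x = (g1, g2).
Proof. by rewrite /grad2 !derive_affine /= !mulr1 !mulr0 addr0 add0r. Qed.

Lemma triangle_vertex_bound a b c g (S : R) : cross (b - a) (c - a) != 0 ->
  `|dot2 g (unit_tangent a b)| * sqrt (edist2 a b) +
  `|dot2 g (unit_tangent c a)| * sqrt (edist2 c a) <= S ->
  sqrt (dot2 g g * (`|cross (b - a) (c - a)| / 2)) <=
  sqrt (set_diameter (triangle a b c)) / sqrt (2 * sin (angle_at a b c)) * S.
Proof.
move=> D0 HS; have [Ta Tb Tc] := triangle_vertices a b c.
apply: vertex_bound => //; try exact: edist2_le_diameter.
have E : dot2 g (a - c) = - dot2 g (c - a) by rewrite /dot2 /=; ring.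
by rewrite !normr_dot2_unit_tangent E normrN (edist2C c) in HS.
Qed.

Lemma max_angle_cases a b c : max_angle a b c = angle_at a b c \/
  max_angle a b c = angle_at b c a \/ max_angle a b c = angle_at c a b.
Proof. by rewrite /max_angle /Num.max; repeat case: ifP => _; auto. Qed.

End LinearElement.

Unset Implicit Arguments.
Theorem lemmaC1 (R : realType) (a1 a2 a3 : R * R) (v : R * R -> R) :
  nondegenerate_tri a1 a2 a3 -> P1 v ->
  let T := triangle a1 a2 a3 in
  let hT := set_diameter T in
  let thM := max_angle a1 a2 a3 in
  L2norm_vec T (grad2 v) <=
    Num.sqrt hT / Num.sqrt (2 * sin thM) *
    (L2norm_edge a2 a3 (fun x => dot2 (grad2 v x) (unit_tangent a2 a3)) +
     L2norm_edge a3 a1 (fun x => dot2 (grad2 v x) (unit_tangent a3 a1)) +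
     L2norm_edge a1 a2 (fun x => dot2 (grad2 v x) (unit_tangent a1 a2))).
Proof.
move=> D0 [g1 [g2 [k vE]]] /=.
have vE' : v = fun y => g1 * y.1 + g2 * y.2 + k by apply/funext.
have -> : grad2 v = fun=> (g1, g2) by apply/funext => x; rewrite vE' grad2_affine.
rewrite !L2norm_edge_cst.
apply: le_trans (L2norm_vec_cst_le _ (measurable_triangle D0) (leb2_triangle_le D0)) _.
have E0 p q : 0 <= `|dot2 (g1, g2) (unit_tangent p q)| * Num.sqrt (edist2 p q).
  by rewrite mulr_ge0 ?sqrtr_ge0.
have D0_2 : cross (a3 - a2) (a1 - a2) != 0 by rewrite cross_rotate.
have D0_3 : cross (a1 - a3) (a2 - a3) != 0 by rewrite cross_rotate.
have [->|[->|->]] := max_angle_cases a1 a2 a3.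
- apply: triangle_vertex_bound => //; have := E0 a2 a3; lra.
- rewrite -(triangle_rotate a1) -(cross_rotate a1); apply: triangle_vertex_bound => //.
  have := E0 a3 a1; lra.
- rewrite -(triangle_rotate a1) -(triangle_rotate a2) -(cross_rotate a1) -(cross_rotate a2).
  apply: triangle_vertex_bound => //; have := E0 a1 a2; lra.
Qed.
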